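(* For every $m\in\mathbb N$, $(\mathcal F_m,l_m)$ is a spherically complete ultrametric space.
   Context: Formulas are built from $\bot$ and atoms by $\to$ and $\Box$; sequents $\Gamma\Rightarrow\Delta$ have finite multisets of formulas on each side, and $\Box\Pi$ denotes $\{\Box B:B\in\Pi\}$. The calculus $\mathsf{Grz}_\infty+\mathsf{cut}$ has initial sequents $\Gamma,p\Rightarrow p,\Delta$ ($p$ atomic), $\Gamma,\bot\Rightarrow\Delta$, and rules $(\to_L)$ from $\Gamma,B\Rightarrow\Delta$ and $\Gamma\Rightarrow A,\Delta$ infer $\Gamma,A\to B\Rightarrow\Delta$; $(\to_R)$ from $\Gamma,A\Rightarrow B,\Delta$ infer $\Gamma\Rightarrow A\to B,\Delta$; $(\mathsf{refl})$ from $\Gamma,B,\Box B\Rightarrow\Delta$ infer $\Gamma,\Box B\Rightarrow\Delta$; $(\Box)$ from left premise $\Gamma,\Box\Pi\Rightarrow A,\Delta$ and right premise $\Box\Pi\Rightarrow A$ infer $\Gamma,\Box\Pi\Rightarrow\Box A,\Delta$; $(\mathsf{cut})$ from $\Gamma\Rightarrow A,\Delta$ and $\Gamma,A\Rightarrow\Delta$ infer $\Gamma\Rightarrow\Delta$. An $\infty$-proof is a possibly infinite tree of sequents built by these rules with leaves labelled by initial sequents, in which every infinite branch passes through a right premise of $(\Box)$ infinitely often. $\mathcal P$ is the set of all $\infty$-proofs. The $n$-fragment of an $\infty$-proof is the finite tree obtained by cutting every branch at the $n$-th (counting from the root) right premise of the rule $(\Box)$; the $1$-fragment is the main fragment, and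 the local height $|\pi|$ is the length of the longest branch in the main fragment of $\pi$ (an $\infty$-proof consisting only of an initial sequent has local height $0$). For $\pi,\tau\in\mathcal P$ write $\pi\sim_n\tau$ if their $n$-fragments coincide; $\pi\sim_0\tau$ always. $\mathcal F_m$ is the set of all functions $\mathsf u:\mathcal P^m\to\mathcal P$ that are non-expansive, i.e. for all tuples $\vec\pi,\vec\pi'$ and $n\in\mathbb N$, if $\pi_i\sim_n\pi'_i$ for all $i\le m$ then $\mathsf u(\vec\pi)\sim_n\mathsf u(\vec\pi')$. For $\mathsf a,\mathsf b\in\mathcal F_m$ write $\mathsf a\sim_{n,k}\mathsf b$ if $\mathsf a(\vec\pi)\sim_n\mathsf b(\vec\pi)$ for all $\vec\pi\in\mathcal P^m$ and moreover $\mathsf a(\vec\pi)\sim_{n+1}\mathsf b(\vec\pi)$ whenever $\sum_{i=1}^m|\pi_i|<k$. Define $l_m(\mathsf a,\mathsf b)=\frac12\inf\{2^{-n}+2^{-n-k}\mid \mathsf a\sim_{n,k}\mathsf b\}$. An ultrametric space is a metric space with $d(x,z)\le\max\{d(x,y),d(y,z)\}$; it is spherically complete if every descending sequence of closed balls $B_r(x)=\{y: d(x,y)\le r\}$ has a common point. *)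

From Stdlib Require Import Reals ClassicalEpsilon.
From Coquelicot Require Import Rbar Lub.
From HB Require Import structures.
From mathcomp Require Import all_boot.
From mathcomp Require Import finmap multiset.

Set Implicit Arguments.
Unset Strict Implicit.
Unset Printing Implicit Defensive.

Inductive fml : Type :=
| Bot : fml
| Atom : nat -> fml
| Imp : fml -> fml -> fml
| Box : fml -> fml.

Fixpoint fml_enc (A : fml) : GenTree.tree nat :=
  match A with
  | Bot => GenTree.Node 0 [::]
  | Atom p => GenTree.Leaf p
  | Imp A B => GenTree.Node 1 [:: fml_enc A; fml_enc B]
  | Box A => GenTree.Node 2 [:: fml_enc A]
  end.

Fixpoint fml_dec (t : GenTree.tree nat) : option fml :=
  match t with
  | GenTree.Leaf p => Some (Atom p)
  | GenTree.Node 0 [::] => Some Bot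
  | GenTree.Node 1 [:: a; b] =>
      match fml_dec a, fml_dec b with
      | Some A, Some B => Some (Imp A B)
      | _, _ => None
      end
  | GenTree.Node 2 [:: a] =>
      match fml_dec a with Some A => Some (Box A) | None => None end
  | _ => None
  end.

Lemma fml_encK : pcancel fml_enc fml_dec.
Proof. by elim=> [|p|A IHA B IHB|A IHA] //=; rewrite ?IHA ?IHB. Qed.

HB.instance Definition _ := Countable.copy fml (pcan_type fml_encK).

Local Open Scope mset_scope.

Definition fmset := {mset fml}.
Definition sequent : Type := (fmset * fmset)%type.

Definition boxes (Pi : fmset) : fmset := seq_mset (map Box (enum_mset Pi)).

Definition initial (s : sequent) : Prop :=
  (exists (G D : fmset) (p : nat), s = (G `+` [mset Atom p], [mset Atom p] `+` D))
  \/ (exists (G D : fmset), s = (G `+` [mset Bot], D)).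

Definition impR_inst (s s0 : sequent) : Prop :=
  exists (G D : fmset) (A B : fml),
    s = (G, [mset Imp A B] `+` D) /\ s0 = (G `+` [mset A], [mset B] `+` D).

Definition refl_inst (s s0 : sequent) : Prop :=
  exists (G D : fmset) (B : fml),
    s = (G `+` [mset Box B], D) /\ s0 = (G `+` [mset B] `+` [mset Box B], D).

Definition impL_inst (s s0 s1 : sequent) : Prop :=
  exists (G D : fmset) (A B : fml),
    s = (G `+` [mset Imp A B], D) /\ s0 = (G `+` [mset B], D)
    /\ s1 = (G, [mset A] `+` D).

Definition box_inst (s s0 s1 : sequent) : Prop :=
  exists (G D Pi : fmset) (A : fml),
    s = (G `+` boxes Pi, [mset Box A] `+` D)
    /\ s0 = (G `+` boxes Pi, [mset A] `+` D)
    /\ s1 = (boxes Pi, [mset A]).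

Definition cut_inst (s s0 s1 : sequent) : Prop :=
  exists (G D : fmset) (A : fml),
    s = (G, D) /\ s0 = (G, [mset A] `+` D) /\ s1 = (G `+` [mset A], D).

Close Scope mset_scope.
Local Close Scope R_scope.
Local Open Scope nat_scope.

(* A node is addressed by the
   sequence of child indices from the root (child 0 = left premise,
   child 1 = right premise); [t q = None] means there is no node at q. *)
Definition tree := seq nat -> option sequent.

Definition node_ok (t : tree) (p : seq nat) (s : sequent) : Prop :=
  ((forall i, t (rcons p i) = None) /\ initial s)
  \/ (exists s0, t (rcons p 0) = Some s0
        /\ (forall i, 1 <= i -> t (rcons p i) = None)
        /\ (impR_inst s s0 \/ refl_inst s s0))
  \/ (exists s0 s1, t (rcons p 0) = Some s0 /\ t (rcons p 1) = Some s1
        /\ (forall i, 2 <= i -> t (rcons p i) = None)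
        /\ (impL_inst s s0 s1 \/ box_inst s s0 s1 \/ cut_inst s s0 s1)).

Definition is_rp (t : tree) (q : seq nat) : Prop :=
  exists p s s0 s1, q = rcons p 1 /\ t p = Some s /\ t (rcons p 0) = Some s0
    /\ t q = Some s1 /\ box_inst s s0 s1.

Definition branch (b : nat -> nat) (n : nat) : seq nat := mkseq b n.

Definition is_infproof (t : tree) : Prop :=
  [/\ t [::] <> None,
      (forall p i, t (rcons p i) <> None -> t p <> None),
      (forall p s, t p = Some s -> node_ok t p s) &
      (forall b : nat -> nat, (forall n, t (branch b n) <> None) ->
         forall N, exists n, N <= n /\ is_rp t (branch b n))].

Definition infproof := {t : tree | is_infproof t}.

Definition nrp (t : tree) (q : seq nat) : nat :=
  \sum_(i < size q)
     (if excluded_middle_informative (is_rp t (take i q)) then 1 else 0).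

(* n-fragment: cut every branch at the n-th right premise of (Box);
   that right premise is kept as a leaf (with its sequent) *)
Definition fragment (t : tree) (n : nat) : tree :=
  fun q => if nrp t q < n then t q else None.

Definition simn (n : nat) (pi tau : infproof) : Prop :=
  fragment (proj1_sig pi) n = fragment (proj1_sig tau) n.

Definition is_lheight (pi : infproof) (h : nat) : Prop :=
  (exists q, fragment (proj1_sig pi) 1 q <> None /\ size q = h) /\
  (forall q, fragment (proj1_sig pi) 1 q <> None -> size q <= h).

Definition lheight (pi : infproof) : nat :=
  epsilon (inhabits 0) (is_lheight pi).

Definition nonexpansive (m : nat) (u : ('I_m -> infproof) -> infproof) : Prop :=
  forall (v v' : 'I_m -> infproof) (n : nat),
    (forall i, simn n (v i) (v' i)) -> simn n (u v) (u v').

Definition Fm (m : nat) := {u : ('I_m -> infproof) -> infproof | nonexpansive u}.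

Definition simnk (m n k : nat) (a b : Fm m) : Prop :=
  (forall v, simn n (proj1_sig a v) (proj1_sig b v)) /\
  (forall v, \sum_(i < m) lheight (v i) < k ->
             simn n.+1 (proj1_sig a v) (proj1_sig b v)).

Local Open Scope R_scope.

Definition lm (m : nat) (a b : Fm m) : R :=
  / 2 * real (Glb_Rbar (fun x => exists n k : nat,
              simnk n k a b /\ x = (/ 2) ^ n + (/ 2) ^ (n + k))).

Definition is_ultrametric (T : Type) (d : T -> T -> R) : Prop :=
  (forall x y, 0 <= d x y) /\
  (forall x y, d x y = 0 <-> x = y) /\
  (forall x y, d x y = d y x) /\
  (forall x y z, d x z <= d x y + d y z) /\
  (forall x y z, d x z <= Rmax (d x y) (d y z)).

Definition cball (T : Type) (d : T -> T -> R) (x : T) (r : R) : T -> Prop :=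
  fun y => d x y <= r.

Definition spherically_complete (T : Type) (d : T -> T -> R) : Prop :=
  forall (c : nat -> T) (r : nat -> R),
    (forall i, 0 <= r i) ->
    (forall i y, cball d (c i.+1) (r i.+1) y -> cball d (c i) (r i) y) ->
    exists y, forall i, cball d (c i) (r i) y.

From Stdlib Require Import Reals.
From mathcomp Require Import all_boot zify.
From Stdlib Require Import ClassicalEpsilon Classical FunctionalExtensionality ProofIrrelevance.
From Stdlib Require Import Wf_nat Lra.
From Coquelicot Require Import Rbar Lub.

Set Implicit Arguments.
Unset Strict Implicit.
Unset Printing Implicit Defensive.

(** The relations ~_(n,k) are equivalence relations, coarser the smaller (n,k) is
  lexicographically, and a ~_(n,k) b for every k already forces a ~_(n+1,0) b.  So for
  a <> b the pairs (n,k) with a ~_(n,k) b form a lexicographic initial segment with a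
  largest element, l_m a b is the value (2^-n + 2^-n-k)/2 at that element, and every
  closed ball of positive radius is an equivalence class of a single ~_(n,k); the
  ultrametric inequality is then transitivity.  A nested sequence of balls, classes of
  ~_(N_i,K_i) around c_i, has a common point y built argumentwise: if the N_i are
  bounded, y v is c_j v for the j whose ball is finest at the local height of v;
  otherwise y v is the limit of the sequence c_j v, which exists because
  infinity-proofs whose n-fragments eventually stabilise for every n glue together to
  an infinity-proof. *)

Local Open Scope nat_scope.

(** * Fragments *)

Definition rp_bit (t : tree) (q : seq nat) : nat :=
  if excluded_middle_informative (is_rp t q) then 1 else 0.

Lemma rp_bit_iff t t' q : (is_rp t q <-> is_rp t' q) -> rp_bit t q = rp_bit t' q.
Proof.
rewrite /rp_bit => tt'.
case: excluded_middle_informative => h; case: excluded_middle_informative => h' //.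
- by case: h'; apply/tt'.
- by case: h; apply/tt'.
Qed.

Lemma nrp_nil t : nrp t [::] = 0.
Proof. by rewrite /nrp big_ord0. Qed.

Lemma nrp_rcons t p x : nrp t (rcons p x) = nrp t p + rp_bit t p.
Proof.
rewrite /nrp size_rcons big_ord_recr /= -cats1 take_cat ltnn subnn take0 cats0.
by congr (_ + _); apply: eq_bigr => i _; rewrite take_cat ltn_ord.
Qed.

Lemma nrp_le_size t q : nrp t q <= size q.
Proof.
elim/last_ind: q => [|p x IH]; first by rewrite nrp_nil.
rewrite nrp_rcons size_rcons -addn1 leq_add // /rp_bit.
by case: excluded_middle_informative.
Qed.

Lemma nrp_rcons_ge t p x : nrp t p <= nrp t (rcons p x).
Proof. by rewrite nrp_rcons leq_addr. Qed.

Lemma is_rp_transfer t t' q :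
  (forall p, q = rcons p 1 -> t p = t' p /\ t (rcons p 0) = t' (rcons p 0)) ->
  t q = t' q -> is_rp t q -> is_rp t' q.
Proof.
move=> tt' tt'q [p [s [s0 [s1 [Eq [tp [tp0 [tq box]]]]]]]].
have [tt'p tt'p0] := tt' p Eq.
by exists p, s, s0, s1; rewrite -tt'q -tt'p -tt'p0.
Qed.

Lemma eq_nrp t t' q :
  (forall x, size x <= size q -> t x = t' x) -> nrp t q = nrp t' q.
Proof.
elim/last_ind: q => [|p y IH] tt'; first by rewrite !nrp_nil.
have tt'p x : size x <= size p -> t x = t' x.
  by move=> le_xp; apply: tt'; rewrite size_rcons ltnW.
have parent_eq p' : p = rcons p' 1 -> t p' = t' p' /\ t (rcons p' 0) = t' (rcons p' 0).
  by move=> Ep; split; apply: tt'p; rewrite Ep ?size_rcons.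
rewrite !nrp_rcons IH //; congr (_ + _); apply: rp_bit_iff.
by split; apply: is_rp_transfer => [p' /parent_eq [-> ->] | ]; rewrite // tt'p.
Qed.

Lemma fragment_lt t n q : nrp t q < n -> fragment t n q = t q.
Proof. by rewrite /fragment => ->. Qed.

Lemma fragment_ge t n q : n <= nrp t q -> fragment t n q = None.
Proof. by rewrite /fragment ltnNge => ->. Qed.

Lemma fragment_Some t n q s : fragment t n q = Some s -> t q = Some s.
Proof. by rewrite /fragment; case: ifP. Qed.

Lemma eq_fragment t t' n q :
  (forall x, size x <= size q -> t x = t' x) -> fragment t n q = fragment t' n q.
Proof. by move=> tt'; rewrite /fragment (eq_nrp tt') tt'. Qed.

Lemma is_rp_fragmentE t n q : nrp t q < n -> is_rp (fragment t n) q <-> is_rp t q.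
Proof.
move=> lt_qn; split.
  move=> [p [s [s0 [s1 [Eq [tp [tp0 [tq box]]]]]]]].
  by exists p, s, s0, s1; rewrite (fragment_Some tp) (fragment_Some tp0) (fragment_Some tq).
apply: is_rp_transfer; last by rewrite fragment_lt.
move=> p def_q; move: lt_qn; rewrite def_q => lt_p1.
have lt_p0 : nrp t (rcons p 0) < n by rewrite nrp_rcons -(nrp_rcons _ _ 1).
have lt_p : nrp t p < n := leq_ltn_trans (nrp_rcons_ge _ _ _) lt_p0.
by rewrite !fragment_lt.
Qed.

Lemma nrp_fragment t n q : nrp t q < n -> nrp (fragment t n) q = nrp t q.
Proof.
elim/last_ind: q => [|p x IH] lt_qn; first by rewrite !nrp_nil.
have lt_pn : nrp t p < n := leq_ltn_trans (nrp_rcons_ge _ _ _) lt_qn.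
by rewrite !nrp_rcons IH //; congr (_ + _); apply: rp_bit_iff; apply: is_rp_fragmentE.
Qed.

Lemma nrp_fragment_lt t n q : nrp (fragment t n) q < n -> nrp t q < n.
Proof.
elim/last_ind: q => [|p x IH] lt_qn; first by move: lt_qn; rewrite !nrp_nil.
have lt_pn : nrp t p < n.
  by apply: IH; apply: leq_ltn_trans (nrp_rcons_ge _ _ _) lt_qn.
by rewrite nrp_rcons -(rp_bit_iff (is_rp_fragmentE lt_pn)) -(nrp_fragment lt_pn)
  -(nrp_rcons _ _ x).
Qed.

Lemma fragment_fragment t n n' : n' <= n -> fragment (fragment t n) n' = fragment t n'.
Proof.
move=> le_n'n; apply: functional_extensionality => q.
case: (ltnP (nrp t q) n') => [lt_qn' | le_n'q].
  have lt_qn := leq_trans lt_qn' le_n'n.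
  by rewrite !fragment_lt ?nrp_fragment.
rewrite (fragment_ge le_n'q); apply: fragment_ge; rewrite leqNgt; apply/negP => lt_fqn'.
have lt_qn := nrp_fragment_lt (leq_trans lt_fqn' le_n'n).
by move: lt_fqn'; rewrite nrp_fragment // ltnNge le_n'q.
Qed.

Lemma fragment_eq_agree t t' n q : fragment t n = fragment t' n -> nrp t q < n ->
  t' q = t q /\ nrp t' q = nrp t q.
Proof.
move=> tt' lt_qn.
have lt_fqn : nrp (fragment t' n) q < n by rewrite -tt' nrp_fragment.
have nrp_t'q : nrp t' q = nrp t q.
  by rewrite -(nrp_fragment (nrp_fragment_lt lt_fqn)) -tt' nrp_fragment.
by split=> //; rewrite -(fragment_lt lt_qn) tt' fragment_lt ?nrp_t'q.
Qed.

Lemma fragment_eq_short t t' n q : fragment t n = fragment t' n -> size q < n -> t q = t' q.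
Proof.
move=> tt' lt_qn.
by rewrite (fragment_eq_agree tt' (leq_ltn_trans (nrp_le_size _ _) lt_qn)).1.
Qed.

Lemma is_rp_fragment_eq t t' n q : fragment t n = fragment t' n -> nrp t q < n ->
  is_rp t q -> is_rp t' q.
Proof.
move=> tt' lt_qn.
have lt_q'n : nrp t' q < n by rewrite (fragment_eq_agree tt' lt_qn).2.
by move=> /(is_rp_fragmentE lt_qn); rewrite tt' => /(is_rp_fragmentE lt_q'n).
Qed.

Lemma simn_mono n n' a b : n' <= n -> simn n a b -> simn n' a b.
Proof.
by rewrite /simn => le_n'n ab; rewrite -(fragment_fragment _ le_n'n) ab fragment_fragment.
Qed.

Lemma simn_sym n a b : simn n a b -> simn n b a.
Proof. by []. Qed.

Lemma simn_trans n a b c : simn n a b -> simn n b c -> simn n a c.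
Proof. by rewrite /simn => ->. Qed.

Lemma simn0 a b : simn 0 a b.
Proof. by []. Qed.

Lemma simn_all_eq (a b : infproof) : (forall n, simn n a b) -> a = b.
Proof.
move=> ab; case: a b ab => [ta Ha] [tb Hb] ab; apply: subset_eq_compat.
apply: functional_extensionality => q.
exact: (fragment_eq_short (ab (size q).+1)).
Qed.

Lemma lheight_simn (a b : infproof) : simn 1 a b -> lheight a = lheight b.
Proof. by rewrite /simn /lheight /is_lheight => ->. Qed.

Lemma node_ok_ext t t' p s : (forall i, t (rcons p i) = t' (rcons p i)) ->
  node_ok t p s -> node_ok t' p s.
Proof. by move=> tt'; rewrite /node_ok; setoid_rewrite tt'. Qed.

Lemma size_branch b n : size (branch b n) = n.
Proof. exact: size_mkseq. Qed.

Lemma branchS b n : branch b n.+1 = rcons (branch b n) (b n).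
Proof. exact: mkseqS. Qed.

(** * Limits of infinity-proofs *)

Section TreeLimit.

Variables (s : nat -> tree) (I : nat -> nat).
Hypothesis s_cauchy : forall M j, I M <= j -> fragment (s (I M)) M = fragment (s j) M.

(* Nodes of length < M lie in every M-fragment, so s has stabilised at q from I (size q).+1 on. *)
Definition lim_tree : tree := fun q => s (I (size q).+1) q.

Lemma lim_tree_agree N j x : I N.+1 <= j -> size x <= N -> s j x = lim_tree x.
Proof.
move=> le_Ij le_xN; pose j' := maxn (I N.+1) (I (size x).+1).
rewrite -(fragment_eq_short (s_cauchy le_Ij)) ?ltnS //.
rewrite (fragment_eq_short (s_cauchy (leq_maxl _ _ : I N.+1 <= j'))) ?ltnS //.
by rewrite -(fragment_eq_short (s_cauchy (leq_maxr _ _ : I (size x).+1 <= j'))).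
Qed.

Lemma fragment_lim_tree M : fragment lim_tree M = fragment (s (I M)) M.
Proof.
apply: functional_extensionality => q.
rewrite (s_cauchy (leq_maxl (I M) (I (size q).+1))).
by apply: eq_fragment => x le_xq; rewrite (lim_tree_agree (leq_maxr _ _) le_xq).
Qed.

Hypothesis s_infproof : forall j, is_infproof (s j).

Lemma lim_tree_branch b : (forall n, lim_tree (branch b n) <> None) ->
  forall N, exists n, N <= n /\ is_rp lim_tree (branch b n).
Proof.
move=> b_in N; apply: NNPP => no_rp.
have nrp_le n : nrp lim_tree (branch b n) < N.+1.
  elim: n => [|n IH]; first by rewrite /branch /= nrp_nil.
  case: (ltnP n N) => [lt_nN | le_Nn].
    by apply: leq_ltn_trans (nrp_le_size _ _) _; rewrite size_branch.
  suff no_bit : rp_bit lim_tree (branch b n) = 0 by rewrite branchS nrp_rcons no_bit addn0.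
  rewrite /rp_bit; case: excluded_middle_informative => // rp.
  by case: no_rp; exists n.
have E := fragment_lim_tree N.+1.
have [_ _ _ s_branch] := s_infproof (I N.+1).
have [n [le_Nn rp]] : exists n, N <= n /\ is_rp (s (I N.+1)) (branch b n).
  by apply: s_branch => n; rewrite (fragment_eq_agree E (nrp_le n)).1.
case: no_rp; exists n; split=> //.
by apply: is_rp_fragment_eq (esym E) _ rp; rewrite (fragment_eq_agree E (nrp_le n)).2.
Qed.

Lemma lim_tree_infproof : is_infproof lim_tree.
Proof.
split.
- by case: (s_infproof (I 1)).
- move=> p i; have [_ closed _ _] := s_infproof (I (size p).+2).
  by rewrite -!(@lim_tree_agree (size p).+1 (I (size p).+2)) ?size_rcons //; apply: closed.
- move=> p sp; have [_ _ ok _] := s_infproof (I (size p).+2).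
  have agree x : size x <= (size p).+1 -> s (I (size p).+2) x = lim_tree x.
    exact: lim_tree_agree.
  rewrite -agree // => /ok; apply: node_ok_ext => i.
  by rewrite agree // size_rcons.
- exact: lim_tree_branch.
Qed.

End TreeLimit.

Lemma infproof_limit (s : nat -> infproof) (I : nat -> nat) :
  (forall M j, I M <= j -> simn M (s (I M)) (s j)) ->
  exists T : infproof, forall M, simn M T (s (I M)).
Proof.
move=> cauchy; pose ts j := sval (s j).
exists (exist _ (lim_tree ts I) (lim_tree_infproof cauchy (fun j => svalP (s j)))) => M.
exact: fragment_lim_tree.
Qed.

(** * Non-expansive maps *)

Definition lex_le (n k n' k' : nat) : Prop := n < n' \/ n = n' /\ k <= k'.

Section NonExpansiveMaps.

Variable m : nat.
Implicit Types (a b c : Fm m) (v : 'I_m -> infproof).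

Definition lheight_sum v : nat := \sum_(i < m) lheight (v i).

Definition level (n k l : nat) : nat := if l < k then n.+1 else n.

Lemma level_lex_le n k n' k' l : lex_le n' k' n k -> level n' k' l <= level n k l.
Proof. by rewrite /level => -[lt_n | [-> le_k]]; do 2 case: ifP => //; lia. Qed.

Lemma simnkP n k a b :
  simnk n k a b <-> forall v, simn (level n k (lheight_sum v)) (sval a v) (sval b v).
Proof.
rewrite /level; split=> [[ab abS] v | ab].
  by case: ifP => [/abS | _]; last exact: ab.
split=> v; first by apply: simn_mono (ab v); case: ifP.
by move=> lt_vk; have := ab v; rewrite /lheight_sum lt_vk.
Qed.

Lemma simnk_lex_le n k n' k' a b : lex_le n' k' n k -> simnk n k a b -> simnk n' k' a b.
Proof.
move=> le /simnkP ab; apply/simnkP => v.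
exact: simn_mono (level_lex_le _ le) (ab v).
Qed.

Lemma simnk_sym n k a b : simnk n k a b -> simnk n k b a.
Proof. by move=> /simnkP ab; apply/simnkP => v; apply: simn_sym. Qed.

Lemma simnk_trans n k a b c : simnk n k a b -> simnk n k b c -> simnk n k a c.
Proof.
move=> /simnkP ab /simnkP bc; apply/simnkP => v.
exact: simn_trans (ab v) (bc v).
Qed.

Lemma simnk00 a b : simnk 0 0 a b.
Proof. by split=> v; first exact: simn0. Qed.

Lemma simnk_succ n a b : (forall k, simnk n k a b) -> simnk n.+1 0 a b.
Proof.
move=> ab; split=> // v.
by have /simnkP/(_ v) := ab (lheight_sum v).+1; rewrite /level ltnSn.
Qed.

Lemma Fm_eq a b : (forall n, simnk n 0 a b) -> a = b.
Proof.
case: a b => [fa Ha] [fb Hb] ab; apply: subset_eq_compat.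
apply: functional_extensionality => v; apply: simn_all_eq => n.
exact: (ab n).1.
Qed.

Lemma lheight_sum_simn n v v' : 0 < n ->
  (forall i, simn n (v i) (v' i)) -> lheight_sum v = lheight_sum v'.
Proof.
move=> n_gt0 vv'; apply: eq_bigr => i _; apply: lheight_simn.
exact: simn_mono n_gt0 (vv' i).
Qed.

End NonExpansiveMaps.

(** * The metric l_m *)

Lemma exists_boundary (P : nat -> Prop) N : P 0 -> ~ P N -> exists n, P n /\ ~ P n.+1.
Proof.
elim: N => [|N IH] P0 notPN; first by [].
by case: (classic (P N)) => [PN | /IH]; [exists N | apply].
Qed.

Lemma ex_minimal (P : nat -> Prop) :
  (exists n, P n) -> exists n, P n /\ forall k, P k -> n <= k.
Proof.
move=> exP.
have [n [[Pn n_min] _]] :=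
  @dec_inh_nat_subset_has_unique_least_element P (fun k => classic (P k)) exP.
by exists n; split=> // k /n_min /leP.
Qed.

Lemma exists_argmax (f : nat -> nat) B : (forall i, f i <= B) -> exists j, forall i, f i <= f j.
Proof.
elim: B => [|B IH] f_le; first by exists 0 => i; apply: leq_trans (f_le i) _.
case: (classic (exists j, f j = B.+1)) => [[j fj] | no_top]; first by exists j => i; rewrite fj.
apply: IH => i; have := f_le i; rewrite leq_eqVlt => /orP [/eqP fi | //].
by case: no_top; exists i.
Qed.

Local Open Scope R_scope.

Definition radius (n k : nat) : R := / 2 * ((/ 2) ^ n + (/ 2) ^ (n + k)).

Lemma half_pow_gt0 n : 0 < (/ 2) ^ n.
Proof. by apply: pow_lt; lra. Qed.

Lemma half_pow_le n n' : (n <= n')%N -> (/ 2) ^ n' <= (/ 2) ^ n.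
Proof.
move=> /subnK <-; rewrite pow_add.
have : (/ 2) ^ (n' - n) <= 1 by rewrite -(pow1 (n' - n)); apply: pow_incr; lra.
have := half_pow_gt0 n; nra.
Qed.

Lemma half_pow_small eps : 0 < eps -> exists n, (/ 2) ^ n < eps.
Proof.
move=> eps_gt0; have [n small] := pow_lt_1_zero (/ 2) ltac:(rewrite Rabs_pos_eq; lra) eps eps_gt0.
by exists n; move: (small n (le_n n)); rewrite Rabs_pos_eq //; apply: Rlt_le; apply: half_pow_gt0.
Qed.

Lemma radius_gt0 n k : 0 < radius n k.
Proof. by rewrite /radius; have := half_pow_gt0 n; have := half_pow_gt0 (n + k); lra. Qed.

Lemma radius_lex_le n k n' k' : lex_le n k n' k' -> radius n' k' <= radius n k.
Proof.
have := half_pow_gt0 (n + k); rewrite /radius => pos [lt_n | [<- le_k]].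
  have h1 : (/ 2) ^ n' <= / 2 * (/ 2) ^ n := half_pow_le lt_n.
  have h2 : (/ 2) ^ (n' + k') <= / 2 * (/ 2) ^ n := half_pow_le (leq_trans lt_n (leq_addr k' n')).
  lra.
have := half_pow_le (n := (n + k)%N) (n' := (n + k')%N); rewrite leq_add2l => /(_ le_k); lra.
Qed.

Lemma Glb_Rbar_eq_inf (E : R -> Prop) (g : R) : (forall x, E x -> g <= x) ->
  (forall eps, 0 < eps -> exists x, E x /\ x < g + eps) -> Glb_Rbar E = g.
Proof.
move=> g_lb g_approx; apply: is_glb_Rbar_unique; split=> [x /g_lb // | [z | | ] z_lb //=].
- apply: Rnot_lt_le => lt_gz; have [x [Ex lt_x]] := g_approx (z - g) ltac:(lra).
  by have /= := z_lb x Ex; lra.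
- by have [x [Ex _]] := g_approx 1 Rlt_0_1; apply: z_lb x Ex.
Qed.

Section Metric.

Variable m : nat.
Implicit Types a b c : Fm m.

Definition is_level a b (n0 k0 : nat) : Prop :=
  forall n k, simnk n k a b <-> lex_le n k n0 k0.

Lemma exists_level a b : a <> b -> exists n0 k0, is_level a b n0 k0.
Proof.
move=> neq_ab.
have [N notN] : exists N, ~ simnk N 0 a b.
  apply: NNPP => all_N; apply: neq_ab; apply: Fm_eq => n.
  by apply: NNPP => notn; apply: all_N; exists n.
have [n0 [n0_ok n0S_not]] := exists_boundary (P := fun n => simnk n 0 a b) (simnk00 a b) notN.
have [K notK] : exists K, ~ simnk n0 K a b.
  apply: NNPP => all_K; apply: n0S_not; apply: simnk_succ => k.
  by apply: NNPP => notk; apply: all_K; exists k.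
have [k0 [k0_ok k0S_not]] := exists_boundary (P := fun k => simnk n0 k a b) n0_ok notK.
exists n0, k0 => n k; split=> [ab | le]; last exact: simnk_lex_le le k0_ok.
apply: NNPP => not_le; apply: k0S_not; apply: simnk_lex_le ab.
by move: not_le; rewrite /lex_le; lia.
Qed.

Lemma lm_level a b n0 k0 : is_level a b n0 k0 -> lm a b = radius n0 k0.
Proof.
move=> lev; rewrite /lm /radius (@Glb_Rbar_eq_inf _ ((/ 2) ^ n0 + (/ 2) ^ (n0 + k0))) //.
- move=> _ [n [k [/lev le ->]]].
  by have := radius_lex_le le; rewrite /radius; lra.
- move=> eps eps_gt0; exists ((/ 2) ^ n0 + (/ 2) ^ (n0 + k0)); split; last lra.
  by exists n0, k0; split=> //; apply/lev; right.
Qed.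

Lemma lm_diag a : lm a a = 0.
Proof.
rewrite /lm (@Glb_Rbar_eq_inf _ 0) /=; first lra.
- move=> _ [n [k [_ ->]]].
  by have := radius_gt0 n k; rewrite /radius; lra.
- move=> eps eps_gt0; have [n small] := half_pow_small (ltac:(lra) : 0 < eps / 2).
  exists ((/ 2) ^ n + (/ 2) ^ (n + n)); split; first by exists n, n.
  by have := half_pow_le (leq_addr n n); lra.
Qed.

Lemma lm_ge0 a b : 0 <= lm a b.
Proof.
case: (classic (a = b)) => [-> | /exists_level [n0 [k0 /lm_level ->]]].
  by rewrite lm_diag; apply: Rle_refl.
exact: Rlt_le (radius_gt0 _ _).
Qed.

Lemma lm_eq0 a b : lm a b = 0 -> a = b.
Proof.
move=> ab0; apply: NNPP => /exists_level [n0 [k0 /lm_level ab]].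
by have := radius_gt0 n0 k0; lra.
Qed.

Lemma lm_le_radius n k a b : simnk n k a b -> lm a b <= radius n k.
Proof.
case: (classic (a = b)) => [-> _ | /exists_level [n0 [k0 lev]] /lev le].
  by rewrite lm_diag; apply: Rlt_le; apply: radius_gt0.
by rewrite (lm_level lev); apply: radius_lex_le.
Qed.

Lemma lm_sym a b : lm a b = lm b a.
Proof.
case: (classic (a = b)) => [-> // | /exists_level [n0 [k0 lev]]].
rewrite (lm_level lev) (@lm_level b a n0 k0) // => n k.
by rewrite -lev; split; apply: simnk_sym.
Qed.

Lemma lm_ball r : 0 < r -> exists n k, forall a b, lm a b <= r <-> simnk n k a b.
Proof.
move=> r_gt0; have [n1 small] := half_pow_small r_gt0.
have n1_ok : radius n1 0 <= r by rewrite /radius addn0; lra.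
have [N [[K1 N_ok] N_min]] :=
  ex_minimal (P := fun n => exists k, radius n k <= r) (ex_intro _ n1 (ex_intro _ 0%N n1_ok)).
have [K [K_ok K_min]] := ex_minimal (P := fun k => radius N k <= r) (ex_intro _ K1 N_ok).
exists N, K => a b; split=> [ab_le | /lm_le_radius]; last lra.
case: (classic (a = b)) => [-> // | /exists_level [n0 [k0 lev]]].
apply/lev; rewrite (lm_level lev) in ab_le.
have := N_min n0 (ex_intro _ k0 ab_le); rewrite leq_eqVlt => /orP [/eqP eq_N | lt_N].
  by right; split=> //; apply: K_min; rewrite eq_N.
by left.
Qed.

Lemma lm_ultra a b c : lm a c <= Rmax (lm a b) (lm b c).
Proof.
case: (classic (a = b)) => [<- | neq_ab]; first by rewrite lm_diag; apply: Rmax_r.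
have r_gt0 : 0 < Rmax (lm a b) (lm b c).
  have : lm a b <> 0 by move/lm_eq0.
  by have := lm_ge0 a b; have := Rmax_l (lm a b) (lm b c); lra.
have [n [k ball]] := lm_ball r_gt0.
apply/ball; apply: (@simnk_trans _ _ _ _ b); apply/ball; [exact: Rmax_l | exact: Rmax_r].
Qed.

Lemma lm_ultrametric : is_ultrametric (@lm m).
Proof.
split; first exact: lm_ge0.
split; first by move=> a b; split=> [/lm_eq0 | ->] //; apply: lm_diag.
split; first exact: lm_sym.
split; last exact: lm_ultra.
move=> a b c; apply: Rle_trans (lm_ultra a b c) _.
by apply: Rmax_lub; have := lm_ge0 a b; have := lm_ge0 b c; lra.
Qed.

End Metric.

(** * Spherical completeness *)

Section NestedBalls.

Variables (m : nat) (c : nat -> Fm m) (N K : nat -> nat).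
Hypothesis c_nested : forall i j, (i <= j)%N -> simnk (N i) (K i) (c i) (c j).

Lemma nested_common_bounded B :
  (forall i, (N i <= B)%N) -> exists y : Fm m, forall i, simnk (N i) (K i) (c i) y.
Proof.
move=> N_le.
have [g g_max] : exists g : nat -> nat,
    forall l i, (level (N i) (K i) l <= level (N (g l)) (K (g l)) l)%N.
  apply: (choice (fun l j => forall i, (level (N i) (K i) l <= level (N j) (K j) l)%N)) => l.
  apply: (@exists_argmax _ B.+1) => i.
  by rewrite /level; case: ifP => _; [rewrite ltnS | apply: leqW].
(* The index g depends on v only through its local height, which ~_n preserves for n > 0. *)
pose y v := sval (c (g (lheight_sum v))) v.
have y_ne : nonexpansive y.
  move=> v v' [|n] vv'; first exact: simn0.
  by rewrite /y (lheight_sum_simn _ vv') //; apply: (svalP (c _)).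
exists (exist _ y y_ne) => i; apply/simnkP => v /=.
set l := lheight_sum v.
case: (leqP i (g l)) => [le_ig | lt_gi].
  by have /simnkP := c_nested le_ig; apply.
apply: simn_sym; apply: simn_mono (g_max l i) _.
by have /simnkP := c_nested (ltnW lt_gi); apply.
Qed.

Lemma nested_common_unbounded :
  (forall M, exists i, (M <= N i)%N) -> exists y : Fm m, forall i, simnk (N i) (K i) (c i) y.
Proof.
move=> /choice [I N_I].
have cauchy v M j : (I M <= j)%N -> simn M (sval (c (I M)) v) (sval (c j) v).
  by move=> le_Ij; apply: simn_mono (N_I M) _; apply: (c_nested le_Ij).1.
have [Y Y_lim] : exists Y : ('I_m -> infproof) -> infproof,
    forall v M, simn M (Y v) (sval (c (I M)) v).
  apply: (choice (fun v T => forall M, simn M T (sval (c (I M)) v))) => v.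
  exact: (@infproof_limit (fun j => sval (c j) v) I (cauchy v)).
have Y_ne : nonexpansive Y.
  move=> v v' n vv'; apply: simn_trans (Y_lim v n) _.
  exact: simn_trans (svalP (c (I n)) _ _ _ vv') (simn_sym (Y_lim v' n)).
exists (exist _ Y Y_ne) => i; apply/simnkP => v /=.
set p := level _ _ _.
have /simnkP/(_ v) c_ij := c_nested (leq_maxl i (I p)).
apply: simn_trans c_ij _; exact: simn_sym (simn_trans (Y_lim v p) (cauchy v p _ (leq_maxr _ _))).
Qed.

Lemma nested_common : exists y : Fm m, forall i, simnk (N i) (K i) (c i) y.
Proof.
case: (classic (exists B, forall i, (N i <= B)%N)) => [[B N_le] | N_unbounded].
  exact: nested_common_bounded N_le.
apply: nested_common_unbounded => M; apply: NNPP => no_i; apply: N_unbounded.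
exists M => i; case: (leqP (N i) M) => // /ltnW le_MN.
by case: no_i; exists i.
Qed.

End NestedBalls.

Lemma lm_spherically_complete m : spherically_complete (@lm m).
Proof.
move=> c r r_ge0 nested; rewrite /cball in nested *.
have ball_chain i d y : lm (c (d + i)%N) y <= r (d + i)%N -> lm (c i) y <= r i.
  by elim: d y => [// | d IH] y; rewrite addSn => /nested /IH.
have c_chain i j : (i <= j)%N -> lm (c i) (c j) <= r i.
  by move=> /subnK <-; apply: (ball_chain _ (j - i)%N); rewrite lm_diag.
case: (classic (exists i, r i = 0)) => [[i ri0] | r_pos].
  exists (c i) => j; case: (leqP j i) => [/c_chain // | /ltnW /c_chain cij].
  have /lm_eq0 -> : lm (c i) (c j) = 0 by apply: Rle_antisym _ (lm_ge0 _ _); rewrite -ri0.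
  by rewrite lm_diag.
have r_gt0 i : 0 < r i by case: (r_ge0 i) => // ri0; case: r_pos; exists i.
have [NK ball] : exists NK : nat -> nat * nat,
    forall i (a b : Fm m), lm a b <= r i <-> simnk (NK i).1 (NK i).2 a b.
  apply: (choice (fun i nk => forall a b : Fm m, lm a b <= r i <-> simnk nk.1 nk.2 a b)) => i.
  by have [n [k ball]] := lm_ball m (r_gt0 i); exists (n, k).
have [y y_in] := @nested_common m c (fun i => (NK i).1) (fun i => (NK i).2)
  (fun i j le_ij => proj1 (ball i _ _) (c_chain i j le_ij)).
by exists y => i; apply/ball.
Qed.

Theorem proposition4p3 (m : nat) :
  is_ultrametric (@lm m) /\ spherically_complete (@lm m).
Proof. by split; [apply: lm_ultrametric | apply: lm_spherically_complete]. Qed.
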